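(* Let $U$ be an $n\times n$ unitary matrix. Suppose $W$ is an $n\times n$ unitary matrix such that $U = W U' W^*$, where $$U' = \operatorname{diag}\Big( \begin{bmatrix}\xi_1 I_{n_1} & 0\\ 0 & \overline{\xi_1} I_{n_1}\end{bmatrix}, \ldots, \begin{bmatrix}\xi_d I_{n_d} & 0\\ 0 & \overline{\xi_d} I_{n_d}\end{bmatrix}, \begin{bmatrix} I_\ell & 0\\ 0 & -I_k\end{bmatrix}\Big),$$ with $n_1,\dots,n_d\ge 1$, $\ell,k\ge 0$, $2n_1+\cdots+2n_d+\ell+k = n$, and $\xi_1,\dots,\xi_d \in \mathbb{T}\setminus\{1,-1\}$ such that $\xi_1,\dots,\xi_d,\overline{\xi_1},\dots,\overline{\xi_d}$ are pairwise distinct (blocks $I_\ell$ or $-I_k$ are absent when $\ell=0$ or $k=0$). Then every conjugation $C$ on $\mathbb{C}^n$ with $CUC = U$ has the form $$C = W\, \operatorname{diag}\Big( \begin{bmatrix} 0 & V_1\\ V_1^t & 0\end{bmatrix}, \ldots, \begin{bmatrix} 0 & V_d\\ V_d^t & 0\end{bmatrix}, \begin{bmatrix} Q_\ell & 0\\ 0 & Q_k\end{bmatrix}\Big)\, J\, W^*,$$ where each $V_j$ is an $n_j\times n_j$ unitary matrix, $Q_\ell$ and $Q_k$ are $\ell\times\ell$ and $k\times k$ unitary matrices with $Q_\ell^t = Q_\ell$ and $Q_k^t = Q_k$ (absent when $\ell=0$, resp. $k=0$), and $J$ is the conjugation on $\mathbb{C}^n$ given by $J[x_1,\dots,x_n]^t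 = [\overline{x_1},\dots,\overline{x_n}]^t$.
   Context: A conjugation on $\mathbb{C}^n$ is an antilinear, isometric map $C$ with $C^2=I$. $I_m$ denotes the $m\times m$ identity matrix, $^t$ denotes transpose, $\mathbb{T}$ is the unit circle, and $\operatorname{diag}(\cdot)$ denotes a block diagonal matrix. *)

From HB Require Import structures.
From mathcomp Require Import all_boot all_order all_algebra sesquilinear spectral.
Set Implicit Arguments. Unset Strict Implicit. Unset Printing Implicit Defensive.
Import Order.TTheory GRing.Theory Num.Theory.
Local Open Scope ring_scope.

Definition Jmap (C : numClosedFieldType) n (x : 'cV[C]_n) : 'cV[C]_n := map_mx Num.conj x.

Definition cnorm2 (C : numClosedFieldType) n (x : 'cV[C]_n) : C :=
  \sum_(i < n) `|x i 0| ^+ 2.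

Definition conjugation (C : numClosedFieldType) n (f : 'cV[C]_n -> 'cV[C]_n) : Prop :=
  [/\ (forall (a : C) (x y : 'cV[C]_n), f (a *: x + y) = a^* *: f x + f y),
      (forall x, cnorm2 (f x) = cnorm2 x) &
      (forall x, f (f x) = x)].

Definition Uprime (C : numClosedFieldType) (d : nat) (nn : 'I_d -> nat) (xi : 'I_d -> C)
    (l k : nat) : 'M[C]_(\sum_(j < d) (nn j + nn j) + (l + k)) :=
  block_mx (\mxdiag_(j < d) block_mx ((xi j)%:M : 'M_(nn j)) 0 0 (((xi j)^*)%:M : 'M_(nn j)))
           0 0
           (block_mx (1%:M : 'M_l) 0 0 ((-1)%:M : 'M_k)).

Definition Dmx (C : numClosedFieldType) (d : nat) (nn : 'I_d -> nat)
    (V : forall j : 'I_d, 'M[C]_(nn j)) (l k : nat) (Ql : 'M[C]_l) (Qk : 'M[C]_k)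
    : 'M[C]_(\sum_(j < d) (nn j + nn j) + (l + k)) :=
  block_mx (\mxdiag_(j < d) block_mx (0 : 'M_(nn j)) (V j) (V j)^T 0)
           0 0
           (block_mx Ql 0 0 Qk).

From HB Require Import structures.
From mathcomp Require Import all_boot all_order all_algebra sesquilinear spectral.
Set Implicit Arguments. Unset Strict Implicit. Unset Printing Implicit Defensive.
Import Order.TTheory GRing.Theory Num.Theory Num.Def.
Local Open Scope ring_scope.
Local Open Scope sesquilinear_scope.
Local Notation "A ^c" := (map_mx conjC A) : ring_scope.

(* An antilinear map is x |-> A x^c for a matrix A.  For a conjugation,
   C^2 = I gives A A^c = 1 and the isometry gives A^* A = 1, so A is unitary
   and symmetric.  The conjugation x |-> W^* C (W x) thus has a symmetric
   unitary matrix M, and CUC = U becomes U' M = M U'^c: M maps each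
   eigenspace of U'^c into the eigenspace of U' for the same eigenvalue.
   Since U'^c is U' with xi_j and conj xi_j swapped inside each pair of
   blocks, and xi_j, conj xi_j, 1, -1 are pairwise distinct, M is block
   diagonal with blocks [0 V_j; V'_j 0] and diag(Q_l, Q_k).  Symmetry of M
   gives V'_j = V_j^T and Q^T = Q, and unitarity of M passes to its blocks. *)

Section BlockIntertwining.
Variable R : pzRingType.

Lemma block_diag_intertwine m1 m2 n1 n2 (P1 : 'M[R]_m1) (P2 : 'M[R]_m2)
    (Q1 : 'M[R]_n1) (Q2 : 'M[R]_n2) (X : 'M[R]_(m1 + m2, n1 + n2)) :
  block_mx P1 0 0 P2 *m X = X *m block_mx Q1 0 0 Q2 ->
  [/\ P1 *m ulsubmx X = ulsubmx X *m Q1, P1 *m ursubmx X = ursubmx X *m Q2,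
      P2 *m dlsubmx X = dlsubmx X *m Q1 & P2 *m drsubmx X = drsubmx X *m Q2].
Proof.
rewrite -{1 2}[X]submxK !mulmx_block => /eq_block_mx[].
by rewrite !(mul0mx, mulmx0, addr0, add0r).
Qed.

Variables (d : nat) (p : 'I_d -> nat).

Lemma mul_mxdiag (P Q : forall i, 'M[R]_(p i)) :
  \mxdiag_i P i *m \mxdiag_i Q i = \mxdiag_i (P i *m Q i).
Proof.
rewrite {1}/mxdiag mul_mxblock_mxdiag /mxdiag; apply: eq_mxblock => i j.
by have [<-|] := eqVneq i j; rewrite ?conform_mx_id ?mul0mx.
Qed.

Lemma mxdiag_intertwine_blocks (P Q : forall i, 'M[R]_(p i))
    (X : 'M[R]_(\sum_i p i)) :
  \mxdiag_i P i *m X = X *m \mxdiag_i Q i ->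
  forall i j, P i *m submxblock X i j = submxblock X i j *m Q j.
Proof.
rewrite -{1 2}[X]submxblockK mul_mxdiag_mxblock mul_mxblock_mxdiag.
by move/eq_mxblockP.
Qed.

Lemma mxdiag_intertwine_diag (P Q : forall i, 'M[R]_(p i))
    (X : 'M[R]_(\sum_i p i)) :
  \mxdiag_i P i *m X = X *m \mxdiag_i Q i ->
  (forall i j (Y : 'M[R]_(p i, p j)), i != j -> P i *m Y = Y *m Q j -> Y = 0) ->
  X = \mxdiag_i submxblock X i i.
Proof.
move=> PXQ offdiag0; rewrite -[LHS]submxblockK /mxdiag.
apply/eq_mxblockP => i j; have [<-|ij] := eqVneq i j; first by rewrite conform_mx_id.
exact: offdiag0 ij (mxdiag_intertwine_blocks PXQ i j).
Qed.

Lemma mxdiag_intertwine_col_eq0 n (P : forall i, 'M[R]_(p i)) (Q : 'M[R]_n)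
    (X : 'M[R]_(\sum_i p i, n)) :
  \mxdiag_i P i *m X = X *m Q ->
  (forall i (Y : 'M[R]_(p i, n)), P i *m Y = Y *m Q -> Y = 0) -> X = 0.
Proof.
rewrite -{1 2}[X]submxcolK mul_mxdiag_mxcol mxcol_mul => /eq_mxcolP PXQ blocks0.
by rewrite -[X]submxcolK -(mxcol0 (p_ := p)); apply: eq_mxcol => i; apply: blocks0.
Qed.

Lemma mxdiag_intertwine_row_eq0 n (P : 'M[R]_n) (Q : forall i, 'M[R]_(p i))
    (X : 'M[R]_(n, \sum_i p i)) :
  P *m X = X *m \mxdiag_i Q i ->
  (forall i (Y : 'M[R]_(n, p i)), P *m Y = Y *m Q i -> Y = 0) -> X = 0.
Proof.
rewrite -{1 2}[X]submxrowK mul_mxrow_mxdiag mul_mxrow => /eq_mxrowP PXQ blocks0.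
by rewrite -[X]submxrowK -(mxrow0 (q_ := p)); apply: eq_mxrow => i; apply: blocks0.
Qed.

End BlockIntertwining.

Section ScalarIntertwining.
Variable R : idomainType.

Lemma scalar_intertwine_eq0 m n (a b : R) (X : 'M[R]_(m, n)) :
  a%:M *m X = X *m b%:M -> a != b -> X = 0.
Proof.
rewrite mul_scalar_mx mul_mx_scalar => /eqP; rewrite -subr_eq0 -scalerBl.
by rewrite scalemx_eq0 subr_eq0 => /orP[/eqP-> /eqP|/eqP].
Qed.

Lemma block_scalar_intertwine_eq0 m1 m2 n1 n2 (a1 a2 b1 b2 : R)
    (X : 'M[R]_(m1 + m2, n1 + n2)) :
  block_mx a1%:M 0 0 a2%:M *m X = X *m block_mx b1%:M 0 0 b2%:M ->
  a1 != b1 -> a1 != b2 -> a2 != b1 -> a2 != b2 -> X = 0.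
Proof.
move=> /block_diag_intertwine[X11 X12 X21 X22] ab11 ab12 ab21 ab22.
rewrite -[X]submxK (scalar_intertwine_eq0 X11) // (scalar_intertwine_eq0 X12) //.
by rewrite (scalar_intertwine_eq0 X21) // (scalar_intertwine_eq0 X22) // block_mx0.
Qed.

Lemma block_scalar_intertwine_diag m1 m2 n1 n2 (a b : R)
    (X : 'M[R]_(m1 + m2, n1 + n2)) :
  block_mx a%:M 0 0 b%:M *m X = X *m block_mx a%:M 0 0 b%:M -> a != b ->
  X = block_mx (ulsubmx X) 0 0 (drsubmx X).
Proof.
move=> /block_diag_intertwine[_ X12 X21 _] ab.
rewrite -{1}[X]submxK (scalar_intertwine_eq0 X12) //.
by rewrite (scalar_intertwine_eq0 X21) // eq_sym.
Qed.

Lemma block_scalar_intertwine_antidiag m1 m2 n1 n2 (a b : R)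
    (X : 'M[R]_(m1 + m2, n1 + n2)) :
  block_mx a%:M 0 0 b%:M *m X = X *m block_mx b%:M 0 0 a%:M -> a != b ->
  X = block_mx 0 (ursubmx X) (dlsubmx X) 0.
Proof.
move=> /block_diag_intertwine[X11 _ _ X22] ab.
rewrite -{1}[X]submxK (scalar_intertwine_eq0 X11) //.
by rewrite (scalar_intertwine_eq0 X22) // eq_sym.
Qed.

End ScalarIntertwining.

Lemma map_mxdiag (U V : nmodType) (f : {additive U -> V}) d (p : 'I_d -> nat)
    (P : forall i, 'M[U]_(p i)) :
  (\mxdiag_i P i) ^ f = \mxdiag_i (P i ^ f).
Proof.
rewrite /mxdiag; apply/matrixP => a b; rewrite !mxE.
have [e|] := eqVneq (tagnat.sig1 a) (tagnat.sig1 b); last by rewrite !mxE raddf0.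
by move: (tagnat.sig2 b); rewrite -e => y; rewrite !conform_mx_id mxE.
Qed.

Section Unitary.
Variable C : numClosedFieldType.

Lemma map_mx_conjK m n (A : 'M[C]_(m, n)) : A^c^c = A.
Proof. by apply/matrixP => i j; rewrite !mxE conjCK. Qed.

Lemma mulmx_cV_ext m n (P Q : 'M[C]_(m, n)) :
  (forall x : 'cV[C]_n, P *m x = Q *m x) -> P = Q.
Proof.
move=> PQ; apply: trmx_inj; apply/eqP/mulmxP => u.
by rewrite -[u]trmxK -!trmx_mul PQ.
Qed.

Lemma unitarymx_block_diag m1 m2 n1 n2 (A : 'M[C]_(m1, n1)) (B : 'M[C]_(m2, n2)) :
  block_mx A 0 0 B \is unitarymx -> (A \is unitarymx) && (B \is unitarymx).
Proof.
move=> /unitarymxP; rewrite tr_block_mx map_block_mx !trmx0 !map_mx0 mulmx_block.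
rewrite !(mulmx0, mul0mx, addr0, add0r) scalar_mx_block => /eq_block_mx[AA _ _ BB].
by apply/andP; split; apply/unitarymxP.
Qed.

Lemma unitarymx_block_antidiag m1 m2 n1 n2 (A : 'M[C]_(m1, n2)) (B : 'M[C]_(m2, n1)) :
  block_mx 0 A B 0 \is unitarymx -> (A \is unitarymx) && (B \is unitarymx).
Proof.
move=> /unitarymxP; rewrite tr_block_mx map_block_mx !trmx0 !map_mx0 mulmx_block.
rewrite !(mulmx0, mul0mx, addr0, add0r) scalar_mx_block => /eq_block_mx[AA _ _ BB].
by apply/andP; split; apply/unitarymxP.
Qed.

Lemma unitarymx_mxdiag d (p : 'I_d -> nat) (P : forall i, 'M[C]_(p i)) :
  \mxdiag_i P i \is unitarymx -> forall i, P i \is unitarymx.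
Proof.
move=> /unitarymxP; rewrite tr_mxdiag map_mxdiag mul_mxdiag -(mxdiagZ (p_ := p)).
by move=> /eq_mxdiagP PP i; apply/unitarymxP.
Qed.

Lemma unitarymx_conj_inv_sym n (A : 'M[C]_n) :
  A \is unitarymx -> A *m A^c = 1%:M -> A^T = A.
Proof.
move=> /unitarymxP AAt AAc.
have AtE : A^t* = A^c.
  by rewrite -[A^t*]mul1mx -(mulmx1C AAc) -mulmxA AAt mulmx1.
by rewrite -[A^T]map_mx_conjK AtE map_mx_conjK.
Qed.

Lemma cnorm2E n (x : 'cV[C]_n) : cnorm2 x = (x^t* *m x) 0 0.
Proof. by rewrite /cnorm2 !mxE; apply: eq_bigr => i _; rewrite !mxE normCK mulrC. Qed.

Lemma cnorm2_unitary n (W : 'M[C]_n) (x : 'cV[C]_n) :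
  W \is unitarymx -> cnorm2 (W *m x) = cnorm2 x.
Proof.
move=> /unitarymxP/mulmx1C WtW.
by rewrite !cnorm2E trmx_mul map_mxM -mulmxA (mulmxA _ W) WtW mul1mx.
Qed.

Lemma mx_quad_form_eq0 n (H : 'M[C]_n) :
  (forall y : 'cV[C]_n, (y^t* *m H *m y) 0 0 = 0) -> H = 0.
Proof.
move=> H0; pose B (u v : 'cV[C]_n) := (u^t* *m H *m v) 0 0.
have BE u v c : B (u + c *: v) (u + c *: v) =
    B u u + c * B u v + c^* * B v u + c^* * c * B v v.
  rewrite /B.
  have -> : (u + c *: v)^t* = u^t* + c^* *: v^t*.
    by apply/matrixP => ? ?; rewrite !mxE rmorphD rmorphM.
  rewrite !mulmxDl !mulmxDr -!scalemxAl -!scalemxAr !mxE.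
  by rewrite !mulrA !addrA.
have Bdelta i j : B (delta_mx i 0) (delta_mx j 0) = H i j.
  rewrite /B.
  have -> : (delta_mx i 0 : 'cV[C]_n)^t* = delta_mx 0 i.
    by apply/matrixP => a b; rewrite !mxE conjC_nat andbC.
  by rewrite -rowE -colE !mxE.
apply/matrixP => i j; rewrite mxE.
have Hii := H0 (delta_mx i 0); have Hjj := H0 (delta_mx j 0).
have H1 := H0 (delta_mx i 0 + 1 *: delta_mx j 0).
have Hi := H0 (delta_mx i 0 + 'i *: delta_mx j 0).
rewrite -/(B _ _) Bdelta in Hii; rewrite -/(B _ _) Bdelta in Hjj.
rewrite -/(B _ _) BE !Bdelta Hii Hjj !mulr0 addr0 add0r conjC1 !mul1r in H1.
rewrite -/(B _ _) BE !Bdelta Hii Hjj !mulr0 addr0 add0r conjCi in Hi.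
have Hji : H j i = - H i j by apply/eqP; rewrite -addr_eq0 addrC H1.
move: Hi; rewrite Hji mulrN mulNr opprK -mulrDr => /eqP.
by rewrite mulf_eq0 (negbTE (neq0Ci C)) -mulr2n mulrn_eq0 /= => /eqP.
Qed.

Lemma isometry_unitarymx n (A : 'M[C]_n) :
  (forall x, cnorm2 (A *m x) = cnorm2 x) -> A \is unitarymx.
Proof.
move=> Aiso; apply/unitarymxP/mulmx1C/eqP; rewrite -subr_eq0; apply/eqP.
apply: mx_quad_form_eq0 => y; have := Aiso y; rewrite !cnorm2E trmx_mul map_mxM.
rewrite mulmxBr mulmxBl mulmx1 !mulmxA => yAAy.
by rewrite [in LHS]mxE [in X in _ + X]mxE yAAy subrr.
Qed.

End Unitary.

Section Conjugation.
Variables (C : numClosedFieldType) (n : nat).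
Implicit Types (f : 'cV[C]_n -> 'cV[C]_n) (A U W : 'M[C]_n).

Lemma antilinear_mx f :
  (forall a x y, f (a *: x + y) = a^* *: f x + f y) ->
  exists A, forall x, f x = A *m x^c.
Proof.
move=> flin; have f0 : f 0 = 0.
  have f00 := flin 1 0 0; rewrite scale1r addr0 conjC1 scale1r in f00.
  by apply: (addrI (f 0)); rewrite addr0 -f00.
have fZ a x : f (a *: x) = a^* *: f x by rewrite -[a *: x]addr0 flin f0 addr0.
have fD x y : f (x + y) = f x + f y by have := flin 1 x y; rewrite scale1r conjC1 scale1r.
exists (\matrix_(i, j) f (delta_mx j 0) i 0) => x.
rewrite {1}[x]matrix_sum_delta (big_morph f fD f0).
apply/matrixP => i j; rewrite ord1 summxE !mxE; apply: eq_bigr => a _.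
by rewrite big_ord1 fZ !mxE mulrC.
Qed.

Lemma conjugation_mx f : conjugation f ->
  exists A, [/\ A \is unitarymx, A *m A^c = 1%:M & forall x, f x = A *m x^c].
Proof.
case=> flin fiso finv; have [A fE] := antilinear_mx flin.
exists A; split => //.
  apply: isometry_unitarymx => x; have := fiso (x^c); rewrite fE map_mx_conjK => ->.
  by rewrite /cnorm2; apply: eq_bigr => i _; rewrite mxE norm_conjC.
apply: mulmx_cV_ext => x; have := finv x.
by rewrite !fE map_mxM map_mx_conjK mulmxA mul1mx.
Qed.

Lemma conjugation_unitary_similar W f : W \is unitarymx -> conjugation f ->
  conjugation (fun x => W^t* *m f (W *m x)).
Proof.
move=> Wu [flin fiso finv]; have WtW := mulmx1C (unitarymxP Wu).
split=> [a x y|x|x].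
- by rewrite mulmxDr -scalemxAr flin mulmxDr -scalemxAr.
- by rewrite cnorm2_unitary ?trmxC_unitary // fiso cnorm2_unitary.
- by rewrite mulmxA (unitarymxP Wu) mul1mx finv mulmxA WtW mul1mx.
Qed.

Lemma conjugation_mx_commute A U f :
  (forall x, f x = A *m x^c) -> A *m A^c = 1%:M ->
  (forall x, f (U *m f x) = U *m x) -> U *m A = A *m U^c.
Proof.
move=> fE AAc fU; have AUA : A *m U^c *m A^c = U.
  by apply: mulmx_cV_ext => x; rewrite -[RHS]fU !fE !map_mxM map_mx_conjK !mulmxA.
by rewrite -[in LHS]AUA -mulmxA (mulmx1C AAc) mulmx1.
Qed.

End Conjugation.

Section Uprime.
Variables (C : numClosedFieldType) (d : nat) (nn : 'I_d -> nat).
Variables (xi : 'I_d -> C) (l k : nat).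
Hypothesis xi_neq_pm1 : forall j, xi j != 1 /\ xi j != -1.
Hypothesis xi_inj : forall i j, i != j -> xi i != xi j.
Hypothesis conj_xi_inj : forall i j, i != j -> (xi i)^* != (xi j)^*.
Hypothesis xi_neq_conj : forall i j, xi i != (xi j)^*.

Lemma Uprime_conj : (Uprime nn xi l k)^c =
  block_mx
    (\mxdiag_j block_mx ((xi j)^*%:M : 'M_(nn j)) 0 0 ((xi j)%:M : 'M_(nn j))) 0
    0 (block_mx (1%:M : 'M_l) 0 0 ((-1)%:M : 'M_k)).
Proof.
rewrite /Uprime map_block_mx map_mxdiag !map_mx0 map_block_mx !map_mx0.
rewrite !map_scalar_mx rmorph1 rmorphN1; congr block_mx.
by apply: eq_mxdiag => j; rewrite map_block_mx !map_mx0 !map_scalar_mx /= conjCK.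
Qed.

Lemma Uprime_intertwiner_block_form M :
  Uprime nn xi l k *m M = M *m (Uprime nn xi l k)^c ->
  exists (X Y : forall j, 'M[C]_(nn j)) (Q1 : 'M[C]_l) (Q2 : 'M[C]_k),
    M = block_mx (\mxdiag_j block_mx 0 (X j) (Y j) 0) 0 0 (block_mx Q1 0 0 Q2).
Proof.
rewrite Uprime_conj /Uprime => /block_diag_intertwine[M11 M12 M21 M22].
have one_neqN1 : (1 : C) != -1 by rewrite -subr_eq0 opprK -mulr2n mulrn_eq0 oner_eq0.
have conj_xi_neq_pm1 j : (xi j)^* != 1 /\ (xi j)^* != -1.
  have [xi1 xiN1] := xi_neq_pm1 j; split.
  - by apply: contra_neq xi1 => /(congr1 conjC); rewrite conjCK conjC1.
  - by apply: contra_neq xiN1 => /(congr1 conjC); rewrite conjCK rmorphN1.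
have M12_0 : ursubmx M = 0.
  apply: (mxdiag_intertwine_col_eq0 M12) => i Y /block_scalar_intertwine_eq0 Y0.
  by have [? ?] := xi_neq_pm1 i; have [? ?] := conj_xi_neq_pm1 i; apply: Y0.
have M21_0 : dlsubmx M = 0.
  apply: (mxdiag_intertwine_row_eq0 M21) => i Y /block_scalar_intertwine_eq0 Y0.
  have [? ?] := xi_neq_pm1 i; have [? ?] := conj_xi_neq_pm1 i.
  by apply: Y0; rewrite eq_sym.
have M11E := mxdiag_intertwine_diag M11.
have M22E := block_scalar_intertwine_diag M22 one_neqN1.
pose X j := ursubmx (submxblock (ulsubmx M) j j).
pose Y j := dlsubmx (submxblock (ulsubmx M) j j).
exists X, Y, (ulsubmx (drsubmx M)), (drsubmx (drsubmx M)).
rewrite -{1}[M]submxK M12_0 M21_0 {1}M22E {1}M11E; last first.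
  move=> i j Z ij /block_scalar_intertwine_eq0 Z0.
  by apply: Z0; rewrite ?xi_neq_conj ?(xi_inj ij) ?(conj_xi_inj ij) // eq_sym xi_neq_conj.
congr block_mx; apply: eq_mxdiag => j.
exact: block_scalar_intertwine_antidiag (mxdiag_intertwine_blocks M11 j j)
  (xi_neq_conj j j).
Qed.

Lemma Uprime_intertwiner_Dmx M :
  Uprime nn xi l k *m M = M *m (Uprime nn xi l k)^c -> M^T = M ->
  M \is unitarymx ->
  exists (V : forall j : 'I_d, 'M[C]_(nn j)) (Ql : 'M[C]_l) (Qk : 'M[C]_k),
    [/\ (forall j, (V j) \is unitarymx), Ql \is unitarymx /\ Ql^T = Ql,
        Qk \is unitarymx /\ Qk^T = Qk & M = Dmx V Ql Qk].
Proof.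
move=> /Uprime_intertwiner_block_form[X [Y [Q1 [Q2 ->]]]].
rewrite tr_block_mx !trmx0 tr_mxdiag tr_block_mx !trmx0.
move=> /eq_block_mx[/eq_mxdiagP XYT _ _ /eq_block_mx[Q1T _ _ Q2T]].
have YE j : Y j = (X j)^T.
  by have := XYT j; rewrite tr_block_mx !trmx0 => /eq_block_mx[_ _ <- _].
have -> : block_mx (\mxdiag_j block_mx 0 (X j) (Y j) 0) 0 0 (block_mx Q1 0 0 Q2)
          = Dmx X Q1 Q2 by rewrite /Dmx; under eq_mxdiag do rewrite YE.
move=> /unitarymx_block_diag/andP[/unitarymx_mxdiag XU].
move=> /unitarymx_block_diag/andP[Q1U Q2U].
exists X, Q1, Q2; split=> // j.
by have /andP[] := unitarymx_block_antidiag (XU j).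
Qed.

End Uprime.

Theorem theorem3p3 (C : numClosedFieldType) (d : nat) (nn : 'I_d -> nat)
    (xi : 'I_d -> C) (l k : nat)
    (U W : 'M[C]_(\sum_(j < d) (nn j + nn j) + (l + k))) :
  (forall j, (0 < nn j)%N) ->
  (forall j, `|xi j| = 1) ->
  (forall j, xi j != 1 /\ xi j != -1) ->
  (forall i j, i != j -> xi i != xi j) ->
  (forall i j, i != j -> (xi i)^* != (xi j)^*) ->
  (forall i j, xi i != (xi j)^*) ->
  U \is unitarymx -> W \is unitarymx ->
  U = W *m Uprime nn xi l k *m W ^t* ->
  forall f : 'cV[C]_(\sum_(j < d) (nn j + nn j) + (l + k)) ->
             'cV[C]_(\sum_(j < d) (nn j + nn j) + (l + k)),
    conjugation f ->
    (forall x, f (U *m f x) = U *m x) ->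
    exists (V : forall j : 'I_d, 'M[C]_(nn j)) (Ql : 'M[C]_l) (Qk : 'M[C]_k),
      [/\ (forall j, (V j) \is unitarymx),
          Ql \is unitarymx /\ Ql^T = Ql,
          Qk \is unitarymx /\ Qk^T = Qk &
          forall x, f x = W *m Dmx V Ql Qk *m Jmap (W ^t* *m x)].
Proof.
move=> _ _ xi_neq_pm1 xi_inj conj_xi_inj xi_neq_conj _ Wu UE f fconj fU.
have WWt := unitarymxP Wu; have WtW := mulmx1C WWt.
pose g x := W^t* *m f (W *m x).
have gU x : g (Uprime nn xi l k *m g x) = Uprime nn xi l k *m x.
  by rewrite /g !mulmxA -UE fU UE !mulmxA WtW mul1mx -(mulmxA _ (W^t*)) WtW mulmx1.
have [M [Mu MMc gE]] := conjugation_mx (conjugation_unitary_similar Wu fconj).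
have UM := conjugation_mx_commute gE MMc gU.
have [V [Ql [Qk [VU QlU QkU ME]]]] := Uprime_intertwiner_Dmx xi_neq_pm1 xi_inj
  conj_xi_inj xi_neq_conj UM (unitarymx_conj_inv_sym Mu MMc) Mu.
exists V, Ql, Qk; split=> // x.
by rewrite -ME -mulmxA -gE /g !mulmxA WWt !mul1mx.
Qed.
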